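(* Consider a cake-division instance $\langle [n],\{v_a\}_{a\in[n]}\rangle$, let $\alpha\ge1$, let $\widetilde{\mathcal{I}}$ be an $\alpha$-approximately envy-free allocation and let $\mathcal{I}^*$ be a Nash optimal allocation. Then (i) $\mathrm{NSW}(\widetilde{\mathcal{I}})\ge\frac{1}{2\alpha}\mathrm{NSW}(\mathcal{I}^* )$; and (ii) $\mathcal{I}^*$ is $4$-approximately envy-free.
   Context: The cake is $[0,1]$. Each agent's valuation $v_a$ assigns a value $v_a(I)\ge0$ to every interval $I\subseteq[0,1]$ and is normalized ($v_a([0,1])=1$), divisible (for every interval $[x,y]$ and $\lambda\in[0,1]$ there is $z\in[x,y]$ with $v_a([x,z])=\lambda v_a([x,y])$; in particular single points have value $0$), and sigma additive ($v_a(I\cup J)=v_a(I)+v_a(J)$ for disjoint intervals). Intervals meeting only at an endpoint are regarded as disjoint. An allocation is a tuple $\mathcal{I}=\{I_1,\dots,I_n\}$ of pairwise-disjoint (possibly empty) intervals with $\bigcup_aI_a=[0,1]$, $I_a$ going to agent $a$. For $\alpha\ge1$, $\mathcal{I}$ is $\alpha$-approximately envy-free if $v_a(I_a)\ge\frac1\alpha v_a(I_b)$ for all $a,b$. $\mathrm{NSW}(\mathcal{I})=\left(\prod_a v_a(I_a)\right)^{1/n}$, and a Nash optimal allocation is one maximizing $\mathrm{NSW}$ over all allocations. *)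

From Stdlib Require Import Reals Lra Lia.
Open Scope R_scope.

(* An interval [x,y] of the cake is represented by its endpoints x <= y.
   Since single points have value 0 (divisibility), open/closed endpoints
   are immaterial; an empty interval is a degenerate one [x,x].
   A valuation v : R -> R -> R gives v x y = v([x,y]). *)

Definition valuation (v : R -> R -> R) : Prop :=
  (forall x y, 0 <= x -> x <= y -> y <= 1 -> 0 <= v x y) /\
  v 0 1 = 1 /\
  (forall x y lam, 0 <= x -> x <= y -> y <= 1 -> 0 <= lam -> lam <= 1 ->
     exists z, x <= z /\ z <= y /\ v x z = lam * v x y) /\
  (forall x y z, 0 <= x -> x <= y -> y <= z -> z <= 1 ->
     v x z = v x y + v y z).

(* Agents are 0, ..., n-1; agent a receives the interval [l a, r a]. *)
Definition is_allocation (n : nat) (l r : nat -> R) : Prop :=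
  (forall a, (a < n)%nat -> 0 <= l a /\ l a <= r a /\ r a <= 1) /\
  (* pairwise disjoint (meeting only at endpoints is allowed; empty
     intervals are disjoint from everything) *)
  (forall a b, (a < n)%nat -> (b < n)%nat -> a <> b ->
     l a = r a \/ l b = r b \/ r a <= l b \/ r b <= l a) /\
  (forall t, 0 <= t -> t <= 1 ->
     exists a, (a < n)%nat /\ l a <= t /\ t <= r a).

Definition approx_EF (n : nat) (v : nat -> R -> R -> R) (alpha : R)
    (l r : nat -> R) : Prop :=
  forall a b, (a < n)%nat -> (b < n)%nat ->
    v a (l a) (r a) >= / alpha * v a (l b) (r b).

Fixpoint prodR (n : nat) (f : nat -> R) : R :=
  match n with
  | O => 1
  | S m => prodR m f * f m
  end.

(* Nash social welfare: n-th root of the product of the values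
   (the product is nonnegative; its n-th root is 0 when it is 0). *)
Definition NSW (n : nat) (v : nat -> R -> R -> R) (l r : nat -> R) : R :=
  let P := prodR n (fun a => v a (l a) (r a)) in
  if Rlt_dec 0 P then Rpower P (/ INR n) else 0.

Definition nash_optimal (n : nat) (v : nat -> R -> R -> R)
    (l r : nat -> R) : Prop :=
  is_allocation n l r /\
  forall l' r', is_allocation n l' r' -> NSW n v l' r' <= NSW n v l r.

From Stdlib Require Import Reals Lra Lia Classical.
Open Scope R_scope.

(** Part (i).  Let [T] be α-envy-free and [S] arbitrary.  Subadditivity of a
    valuation along the cover [T] shows that agent [a]'s share in [S] is worth
    at most [alpha * u_a] per piece of [T] it meets, where [u_a] is her value
    in [T] (in particular [u_a > 0]).  Pieces of two allocations of an interval
    meet in at most [2n] pairs, so the ratios [f_a / u_a] average at most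
    [2 alpha]; by AM-GM, [prod f <= (2 alpha)^n prod u], i.e.
    [NSW S <= 2 alpha NSW T].

    Part (ii).  Let [S] be Nash optimal; its values are positive, as [T] has
    positive Nash social welfare.  If
    [a] valued a piece [b] to her right more than four times her own, then
    the right neighbour of [a] could absorb [a]'s piece, and [b]'s piece could
    be halved (for [b]) with [a] receiving the half she prefers: [a] more than
    doubles, [b] keeps half, nobody else loses, so the Nash product increases.
    Pieces to the left are handled by reflecting the cake [t |-> 1 - t]. *)

(** * Finite sums and products over the agents [0, ..., n-1] *)

Definition upd (f : nat -> R) (a : nat) (x : R) : nat -> R :=
  fun d => if Nat.eqb d a then x else f d.

Lemma upd_same f a x : upd f a x a = x.
Proof. unfold upd. rewrite Nat.eqb_refl. reflexivity. Qed.

Lemma upd_other f a x d : d <> a -> upd f a x d = f d.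
Proof. intros H. unfold upd. destruct (Nat.eqb_spec d a); [contradiction|reflexivity]. Qed.

Fixpoint sumR (n : nat) (f : nat -> R) : R :=
  match n with O => 0 | S m => sumR m f + f m end.

Lemma sumR_ext n f g :
  (forall i, (i < n)%nat -> f i = g i) -> sumR n f = sumR n g.
Proof.
  induction n as [|n IH]; intros H; simpl; [reflexivity|].
  rewrite H, IH by (auto; intros; apply H; lia). reflexivity.
Qed.

Lemma sumR_le n f g :
  (forall i, (i < n)%nat -> f i <= g i) -> sumR n f <= sumR n g.
Proof.
  induction n as [|n IH]; intros H; simpl; [lra|].
  assert (f n <= g n) by (apply H; lia).
  assert (sumR n f <= sumR n g) by (apply IH; intros; apply H; lia). lra.
Qed.

Lemma sumR_const n c : sumR n (fun _ => c) = INR n * c.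
Proof. induction n as [|n IH]; simpl sumR; [simpl; ring|]. rewrite IH, S_INR. ring. Qed.

Lemma sumR_nonneg n f : (forall i, (i < n)%nat -> 0 <= f i) -> 0 <= sumR n f.
Proof. intros H. rewrite <- (Rmult_0_r (INR n)), <- sumR_const. apply sumR_le; auto. Qed.

Lemma sumR_plus n f g : sumR n (fun i => f i + g i) = sumR n f + sumR n g.
Proof. induction n as [|n IH]; simpl; [ring|]. rewrite IH. ring. Qed.

Lemma sumR_scal n c f : sumR n (fun i => c * f i) = c * sumR n f.
Proof. induction n as [|n IH]; simpl; [ring|]. rewrite IH. ring. Qed.

Lemma sumR_swap n m (F : nat -> nat -> R) :
  sumR n (fun a => sumR m (F a)) = sumR m (fun b => sumR n (fun a => F a b)).
Proof.
  induction n as [|n IH]; simpl.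
  - rewrite sumR_const. ring.
  - rewrite IH, <- sumR_plus. reflexivity.
Qed.

Lemma sumR_update n f a A : (a < n)%nat -> sumR n (upd f a A) = sumR n f - f a + A.
Proof.
  induction n as [|n IH]; intros Ha; [lia|]. simpl.
  destruct (Nat.eq_dec n a) as [->|Hna].
  - rewrite upd_same, (sumR_ext a (upd f a A) f); [ring|].
    intros i Hi. apply upd_other. lia.
  - rewrite IH, upd_other by lia. ring.
Qed.

Lemma sumR_term_le n f i :
  (forall j, (j < n)%nat -> 0 <= f j) -> (i < n)%nat -> f i <= sumR n f.
Proof.
  intros H Hi.
  assert (0 <= sumR n (upd f i 0)).
  { apply sumR_nonneg. intros j Hj. unfold upd. destruct (Nat.eqb j i); auto; lra. }
  rewrite sumR_update in H0 by exact Hi. lra.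
Qed.

Lemma sumR_indicator_le1 n f :
  (forall i, (i < n)%nat -> f i = 0 \/ f i = 1) ->
  (forall i j, (i < n)%nat -> (j < n)%nat -> f i = 1 -> f j = 1 -> i = j) ->
  sumR n f <= 1.
Proof.
  intros H01 Huniq.
  enough (sumR n f = 0 \/ (sumR n f = 1 /\ exists i, (i < n)%nat /\ f i = 1)) by lra.
  induction n as [|n IH]; simpl; [left; reflexivity|].
  destruct IH as [S0|[S1 [i [Hi Ei]]]];
    [intros; apply H01; lia | intros; apply Huniq; auto; lia | |];
    (destruct (H01 n) as [e|e]; [lia| |]).
  - left. lra.
  - right. split; [lra|]. exists n. split; [lia|exact e].
  - right. split; [lra|]. exists i. split; [lia|exact Ei].
  - assert (i = n) by (apply Huniq; auto; lia). lia.
Qed.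
Lemma prodR_ext n f g :
  (forall i, (i < n)%nat -> f i = g i) -> prodR n f = prodR n g.
Proof.
  induction n as [|n IH]; intros H; simpl; [reflexivity|].
  rewrite H, IH by (auto; intros; apply H; lia). reflexivity.
Qed.

Lemma prodR_nonneg n f : (forall i, (i < n)%nat -> 0 <= f i) -> 0 <= prodR n f.
Proof.
  induction n as [|n IH]; intros H; simpl; [lra|].
  apply Rmult_le_pos; [apply IH; intros|]; apply H; lia.
Qed.

Lemma prodR_pos n f : (forall i, (i < n)%nat -> 0 < f i) -> 0 < prodR n f.
Proof.
  induction n as [|n IH]; intros H; simpl; [lra|].
  apply Rmult_lt_0_compat; [apply IH; intros|]; apply H; lia.
Qed.

Lemma prodR_le n f g :
  (forall i, (i < n)%nat -> 0 <= f i <= g i) -> prodR n f <= prodR n g.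
Proof.
  induction n as [|n IH]; intros H; simpl; [lra|].
  apply Rmult_le_compat;
    [apply prodR_nonneg; intros; apply H; lia | apply H; lia
    | apply IH; intros; apply H; lia | apply H; lia].
Qed.

Lemma prodR_mult n f g : prodR n (fun i => f i * g i) = prodR n f * prodR n g.
Proof. induction n as [|n IH]; simpl; [ring|]. rewrite IH. ring. Qed.

Lemma prodR_scal n c f : prodR n (fun i => c * f i) = c ^ n * prodR n f.
Proof. induction n as [|n IH]; simpl; [ring|]. rewrite IH. ring. Qed.

Lemma prodR_extract n f a : (a < n)%nat -> prodR n f = f a * prodR n (upd f a 1).
Proof.
  induction n as [|n IH]; intros Ha; [lia|]. simpl.
  destruct (Nat.eq_dec n a) as [->|Hna].
  - rewrite upd_same, (prodR_ext a (upd f a 1) f); [ring|].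
    intros i Hi. apply upd_other. lia.
  - rewrite IH, upd_other by lia. ring.
Qed.

Lemma prodR_pos_factor n f :
  (forall i, (i < n)%nat -> 0 <= f i) -> 0 < prodR n f ->
  forall i, (i < n)%nat -> 0 < f i.
Proof.
  intros H Hp i Hi. rewrite (prodR_extract n f i Hi) in Hp.
  destruct (H i Hi) as [|e]; [assumption|]. rewrite <- e in Hp. lra.
Qed.

Lemma exp_le x y : x <= y -> exp x <= exp y.
Proof. intros [H|H]; [apply Rlt_le, exp_increasing, H|rewrite H; apply Rle_refl]. Qed.

(** The AM-GM inequality in the form [prod y <= exp (sum y - n)],
    from [1 + t <= exp t] applied to each factor. *)
Lemma prodR_le_exp_sum n y :
  (forall i, (i < n)%nat -> 0 <= y i) -> prodR n y <= exp (sumR n y - INR n).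
Proof.
  induction n as [|n IH]; cbn [prodR sumR]; intros H.
  - simpl. rewrite Rminus_0_r, exp_0. lra.
  - rewrite S_INR.
    replace (sumR n y + y n - (INR n + 1)) with ((sumR n y - INR n) + (y n - 1)) by ring.
    rewrite exp_plus. pose proof (exp_ineq1_le (y n - 1)).
    apply Rmult_le_compat;
      [apply prodR_nonneg; intros; apply H; lia | apply H; lia
      | apply IH; intros; apply H; lia | lra].
Qed.

Lemma prodR_le_of_ratio_sum n f u c :
  0 < c -> (forall a, (a < n)%nat -> 0 <= f a /\ 0 < u a) ->
  sumR n (fun a => f a / u a) <= c * INR n ->
  prodR n f <= c ^ n * prodR n u.
Proof.
  intros Hc Hfu Hsum.
  set (y := fun a => / c * (f a / u a)).
  assert (Hy : forall a, (a < n)%nat -> 0 <= y a).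
  { intros a Ha. destruct (Hfu a Ha). unfold y, Rdiv.
    repeat apply Rmult_le_pos; try apply Rlt_le, Rinv_0_lt_compat; auto. }
  assert (Hprod_y : prodR n y <= 1).
  { eapply Rle_trans; [apply prodR_le_exp_sum; exact Hy|].
    rewrite <- exp_0. apply exp_le. unfold y. rewrite sumR_scal.
    apply (Rmult_le_compat_l (/ c)) in Hsum; [|apply Rlt_le, Rinv_0_lt_compat; exact Hc].
    rewrite <- Rmult_assoc, Rinv_l, Rmult_1_l in Hsum by lra. lra. }
  rewrite (prodR_ext n f (fun a => c * (u a * y a))).
  - rewrite prodR_scal, prodR_mult.
    assert (0 <= c ^ n * prodR n u).
    { apply Rmult_le_pos; [apply pow_le; lra|apply prodR_nonneg; intros a Ha; apply Rlt_le, Hfu, Ha]. }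
    assert (0 <= prodR n y) by (apply prodR_nonneg; exact Hy). nra.
  - intros a Ha. unfold y. field. split; [apply Rgt_not_eq, Hfu, Ha|lra].
Qed.

Definition geomean (n : nat) (x : nat -> R) : R :=
  if Rlt_dec 0 (prodR n x) then Rpower (prodR n x) (/ INR n) else 0.

Lemma NSW_geomean n v l r : NSW n v l r = geomean n (fun a => v a (l a) (r a)).
Proof. reflexivity. Qed.

Lemma geomean_pos n x : 0 < prodR n x -> 0 < geomean n x.
Proof. intros H. unfold geomean. destruct (Rlt_dec _ _); [apply exp_pos|contradiction]. Qed.

Lemma geomean_pos_inv n x : 0 < geomean n x -> 0 < prodR n x.
Proof. unfold geomean. destruct (Rlt_dec _ _); [auto|lra]. Qed.

Lemma geomean_lt n x y : (0 < n)%nat ->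
  0 < prodR n x < prodR n y -> geomean n x < geomean n y.
Proof.
  intros Hn Hxy. unfold geomean.
  destruct (Rlt_dec 0 (prodR n x)), (Rlt_dec 0 (prodR n y)); try lra.
  apply Rlt_Rpower_l; [apply Rinv_0_lt_compat, lt_0_INR, Hn|exact Hxy].
Qed.

Lemma geomean_le_scale n x y c : (0 < n)%nat -> 0 < c -> 0 < prodR n y ->
  prodR n x <= c ^ n * prodR n y -> geomean n x <= c * geomean n y.
Proof.
  intros Hn Hc Hy Hxy. unfold geomean at 2.
  destruct (Rlt_dec 0 (prodR n y)) as [_|]; [|contradiction].
  unfold geomean. destruct (Rlt_dec 0 (prodR n x)) as [Hx|].
  2: { apply Rlt_le, Rmult_lt_0_compat; [exact Hc|apply exp_pos]. }
  assert (Hnr : 0 < INR n) by (apply lt_0_INR, Hn).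
  assert (Hcn : Rpower (c ^ n) (/ INR n) = c).
  { rewrite <- Rpower_pow, Rpower_mult, Rinv_r, Rpower_1 by lra. reflexivity. }
  rewrite <- Hcn. rewrite Rpower_mult_distr by (auto; apply pow_lt, Hc).
  apply Rle_Rpower_l; [apply Rlt_le, Rinv_0_lt_compat, Hnr|lra].
Qed.

Section Valuation.
Variable v : R -> R -> R.
Hypothesis hv : valuation v.

Lemma val_nonneg x y : 0 <= x -> x <= y -> y <= 1 -> 0 <= v x y.
Proof. apply hv. Qed.

Lemma val_add x y z : 0 <= x -> x <= y -> y <= z -> z <= 1 -> v x z = v x y + v y z.
Proof. apply hv. Qed.

Lemma val_point p : 0 <= p -> p <= 1 -> v p p = 0.
Proof. intros H0 H1. pose proof (val_add p p p H0 (Rle_refl _) (Rle_refl _) H1). lra. Qed.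

Lemma val_mono x' x y y' : 0 <= x' -> x' <= x -> x <= y -> y <= y' -> y' <= 1 ->
  v x y <= v x' y'.
Proof.
  intros H0 H1 H2 H3 H4.
  rewrite (val_add x' x y'), (val_add x y y') by lra.
  pose proof (val_nonneg x' x). pose proof (val_nonneg y y'). lra.
Qed.

Lemma val_pos_lt x y : 0 <= x -> x <= y -> y <= 1 -> 0 < v x y -> x < y.
Proof.
  intros H0 [Hxy|Hxy] H1 Hpos; [exact Hxy|]. subst. rewrite val_point in Hpos; lra.
Qed.

Definition overlap_value (x y lb rb : R) : R :=
  if Rlt_dec (Rmax x lb) (Rmin y rb) then v (Rmax x lb) (Rmin y rb) else 0.

Lemma overlap_value_nonneg x y lb rb : 0 <= lb -> rb <= 1 -> 0 <= overlap_value x y lb rb.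
Proof.
  intros H0 H1. unfold overlap_value. destruct (Rlt_dec _ _); [|lra].
  pose proof (Rmax_r x lb). pose proof (Rmin_r y rb). apply val_nonneg; lra.
Qed.

Lemma overlap_value_mono x x' y lb rb : 0 <= lb -> rb <= 1 -> x <= x' ->
  overlap_value x' y lb rb <= overlap_value x y lb rb.
Proof.
  intros H0 H1 Hx. unfold overlap_value.
  assert (Rmax x lb <= Rmax x' lb) by (apply Rle_max_compat_r, Hx).
  destruct (Rlt_dec (Rmax x' lb) _); [|apply overlap_value_nonneg; auto].
  destruct (Rlt_dec (Rmax x lb) _); [|lra].
  pose proof (Rmax_r x lb). pose proof (Rmin_r y rb). apply val_mono; lra.
Qed.

Definition overlaps (x y lb rb : R) : R :=
  if Rlt_dec (Rmax x lb) (Rmin y rb) then 1 else 0.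

Lemma overlap_value_le x y lb rb : 0 <= lb -> lb <= rb -> rb <= 1 ->
  overlap_value x y lb rb <= overlaps x y lb rb * v lb rb.
Proof.
  intros H0 H1 H2. unfold overlap_value, overlaps. destruct (Rlt_dec _ _); [|lra].
  rewrite Rmult_1_l. pose proof (Rmax_r x lb). pose proof (Rmin_r y rb). apply val_mono; lra.
Qed.

End Valuation.

Lemma alloc_agents_pos n l r : is_allocation n l r -> (0 < n)%nat.
Proof. intros (_ & _ & Hcov). destruct (Hcov 0) as [a [Ha _]]; lra || lia. Qed.

Fixpoint minR (n : nat) (g : nat -> R) : R :=
  match n with O => 1 | S m => Rmin (minR m g) (g m) end.

Lemma minR_le n g i : (i < n)%nat -> minR n g <= g i.
Proof.
  induction n as [|n IH]; simpl; intros H; [lia|].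
  destruct (Nat.eq_dec i n) as [->|]; [apply Rmin_r|].
  eapply Rle_trans; [apply Rmin_l|apply IH; lia].
Qed.

Lemma minR_le1 n g : minR n g <= 1.
Proof. induction n as [|n IH]; simpl; [lra|]. eapply Rle_trans; [apply Rmin_l|exact IH]. Qed.

Lemma minR_gt n g t : t < 1 -> (forall i, (i < n)%nat -> t < g i) -> t < minR n g.
Proof.
  induction n as [|n IH]; simpl; intros H1 H2; [exact H1|].
  apply Rmin_glb_lt; [apply IH; auto|apply H2; lia].
Qed.

(** Every point [t < 1] lies in a half-open piece [l b, r b): otherwise, the
    points just to the right of [t] (up to the nearest left endpoint) would
    be uncovered. *)
Lemma alloc_right_cover n l r t : is_allocation n l r -> 0 <= t -> t < 1 ->
  exists b, (b < n)%nat /\ l b <= t /\ t < r b.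
Proof.
  intros (Hb & _ & Hcov) H0 H1.
  destruct (classic (exists b, (b < n)%nat /\ l b <= t /\ t < r b)) as [|Hno]; [assumption|].
  exfalso.
  set (g := fun b => if Rlt_dec t (l b) then l b else 1).
  assert (Hm : t < minR n g).
  { apply minR_gt; [exact H1|]. intros b _. unfold g. destruct (Rlt_dec t (l b)); lra. }
  pose proof (minR_le1 n g).
  destruct (Hcov ((t + minR n g) / 2)) as [b [Hbn [Hl Hr]]]; [lra|lra|].
  pose proof (minR_le n g b Hbn) as Hgb.
  destruct (Rlt_dec t (l b)) as [Htl|Htl].
  { assert (g b = l b) by (unfold g; destruct (Rlt_dec t (l b)); [reflexivity|contradiction]).
    lra. }
  apply Hno. exists b. split; [exact Hbn|split; lra].
Qed.

Definition live (n : nat) (r : nat -> R) (p : R) : R :=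
  sumR n (fun b => if Rlt_dec p (r b) then 1 else 0).

Lemma sumR_drop_term n f g i : (i < n)%nat -> g i = 0 ->
  (forall j, (j < n)%nat -> j <> i -> g j <= f j) -> sumR n g + f i <= sumR n f.
Proof.
  intros Hi Hg Hle.
  replace (sumR n g + f i) with (sumR n (upd g i (f i)))
    by (rewrite sumR_update by exact Hi; lra).
  apply sumR_le. intros j Hj. unfold upd. destruct (Nat.eqb_spec j i) as [->|]; [lra|auto].
Qed.

(** One step of the sweep below: the piece [b0] containing [p] and ending
    before [y] accounts for [p, r b0], after which it no longer counts. *)
Lemma sweep_step n v l r y p b0 :
  valuation v -> is_allocation n l r -> (b0 < n)%nat ->
  0 <= p -> l b0 <= p -> p < r b0 -> r b0 < y -> y <= 1 ->
  live n r (r b0) + 1 <= live n r p /\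
  v p (r b0) + sumR n (fun b => overlap_value v (r b0) y (l b) (r b))
    <= sumR n (fun b => overlap_value v p y (l b) (r b)).
Proof.
  intros hv (Hb & _ & _) Hb0 H0 Hl Hpr Hry Hy. split.
  - unfold live.
    pose proof (sumR_drop_term n (fun b => if Rlt_dec p (r b) then 1 else 0)
                  (fun b => if Rlt_dec (r b0) (r b) then 1 else 0) b0 Hb0) as Hdrop.
    cbv beta in Hdrop. destruct (Rlt_dec p (r b0)); [|lra]. apply Hdrop.
    + destruct (Rlt_dec (r b0) (r b0)); lra.
    + intros j _ _. destruct (Rlt_dec (r b0) (r j)), (Rlt_dec p (r j)); lra.
  - replace (v p (r b0)) with (overlap_value v p y (l b0) (r b0)).
    + rewrite Rplus_comm.
      apply (sumR_drop_term n (fun b => overlap_value v p y (l b) (r b))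
               (fun b => overlap_value v (r b0) y (l b) (r b)) b0); auto.
      * unfold overlap_value. pose proof (Rmax_l (r b0) (l b0)).
        pose proof (Rmin_r y (r b0)). destruct (Rlt_dec _ _); lra.
      * intros j Hj _. destruct (Hb j Hj) as (? & ? & ?).
        apply overlap_value_mono; auto; lra.
    + unfold overlap_value. rewrite Rmax_left, Rmin_right by lra.
      destruct (Rlt_dec _ _); [reflexivity|lra].
Qed.

(** Proof: sweep a point [p]
    from [x] to [y], by induction on the number of pieces extending beyond
    [p]; the piece containing [p] either reaches [y] or is used up. *)
Lemma value_le_sum_overlaps n v l r x y :
  valuation v -> is_allocation n l r -> 0 <= x -> x <= y -> y <= 1 ->
  v x y <= sumR n (fun b => overlap_value v x y (l b) (r b)).
Proof.
  intros hv hA Hx Hxy Hy. pose proof hA as (Hb & _ & _).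
  assert (Hnn : forall p b, (b < n)%nat -> 0 <= overlap_value v p y (l b) (r b))
    by (intros p b Hbn; destruct (Hb b Hbn) as (? & ? & ?); apply overlap_value_nonneg; auto).
  assert (Hlive : forall p, 0 <= live n r p)
    by (intros p; apply sumR_nonneg; intros; destruct (Rlt_dec _ _); lra).
  assert (Hsweep : forall k p, x <= p <= y -> live n r p <= INR k ->
            v p y <= sumR n (fun b => overlap_value v p y (l b) (r b))).
  { induction k as [|k IH]; intros p Hp Hk;
      (destruct (Rle_lt_or_eq_dec p y (proj2 Hp)) as [Hpy|<-];
       [|rewrite val_point by (auto; lra); apply sumR_nonneg; auto]);
      destruct (alloc_right_cover n l r p hA) as [b0 [Hb0 [Hl0 Hr0]]]; try lra;
      (destruct (Rle_dec y (r b0)) as [Hyr|Hyr];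
       [ replace (v p y) with (overlap_value v p y (l b0) (r b0));
         [ apply (sumR_term_le n (fun b => overlap_value v p y (l b) (r b))); auto
         | unfold overlap_value; rewrite Rmax_left, Rmin_left by lra;
           destruct (Rlt_dec p y); [reflexivity|lra] ] |]);
      destruct (sweep_step n v l r y p b0) as [Hstep_live Hstep_sum]; auto; try lra;
      rewrite (val_add v hv p (r b0) y) by (auto; lra).
    - pose proof (Hlive (r b0)). simpl in Hk. lra.
    - rewrite S_INR in Hk. pose proof (IH (r b0) ltac:(lra) ltac:(lra)). lra. }
  apply (Hsweep n x); [lra|].
  unfold live. rewrite <- (Rmult_1_r (INR n)), <- sumR_const.
  apply sumR_le. intros b _. destruct (Rlt_dec _ _); lra.
Qed.

(** * Part (i): an α-envy-free allocation is 2α-approximately Nash optimal *)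

Lemma ef_bound n v alpha l r a b : 1 <= alpha -> approx_EF n v alpha l r ->
  (a < n)%nat -> (b < n)%nat -> v a (l b) (r b) <= alpha * v a (l a) (r a).
Proof.
  intros Halpha hEF Ha Hb. pose proof (Rge_le _ _ (hEF a b Ha Hb)) as H.
  apply (Rmult_le_compat_l alpha) in H; [|lra].
  rewrite <- Rmult_assoc, Rinv_r, Rmult_1_l in H; lra.
Qed.

Lemma ef_value_le_overlaps n v alpha l r a x y :
  (forall d, (d < n)%nat -> valuation (v d)) -> 1 <= alpha ->
  is_allocation n l r -> approx_EF n v alpha l r -> (a < n)%nat ->
  0 <= x -> x <= y -> y <= 1 ->
  v a x y <= alpha * v a (l a) (r a) * sumR n (fun b => overlaps x y (l b) (r b)).
Proof.
  intros hv Halpha hA hEF Ha Hx Hxy Hy. pose proof hA as (Hb & _ & _).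
  eapply Rle_trans; [apply value_le_sum_overlaps; eauto|].
  rewrite <- sumR_scal. apply sumR_le. intros b Hbn. destruct (Hb b Hbn) as (? & ? & ?).
  eapply Rle_trans; [apply overlap_value_le; auto|].
  rewrite (Rmult_comm (alpha * _)). apply Rmult_le_compat_l.
  - unfold overlaps. destruct (Rlt_dec _ _); lra.
  - apply (ef_bound n); auto.
Qed.

(** Under an α-envy-free allocation every agent has positive value: the
    whole cake, worth 1, meets at most [n] pieces each worth at most
    [alpha] times her own. *)
Lemma ef_value_pos n v alpha l r :
  (forall d, (d < n)%nat -> valuation (v d)) -> 1 <= alpha ->
  is_allocation n l r -> approx_EF n v alpha l r ->
  forall a, (a < n)%nat -> 0 < v a (l a) (r a).
Proof.
  intros hv Halpha hA hEF a Ha. pose proof hA as (Hb & _ & _).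
  assert (Hcake : 1 <= alpha * v a (l a) (r a) * INR n).
  { destruct (hv a Ha) as (_ & H01 & _). rewrite <- H01.
    eapply Rle_trans; [apply (ef_value_le_overlaps n v alpha l r); eauto; lra|].
    apply Rmult_le_compat_l.
    - destruct (Hb a Ha) as (? & ? & ?). apply Rmult_le_pos; [lra|apply val_nonneg; auto].
    - rewrite <- (Rmult_1_r (INR n)), <- sumR_const. apply sumR_le.
      intros b _. unfold overlaps. destruct (Rlt_dec _ _); lra. }
  destruct (Hb a Ha) as (? & ? & ?).
  destruct (val_nonneg _ (hv a Ha) (l a) (r a)) as [|e]; auto.
  rewrite <- e in Hcake. lra.
Qed.

Lemma overlaps_cases x y lb rb :
  overlaps x y lb rb = 0 \/
  (overlaps x y lb rb = 1 /\ x < y /\ lb < rb /\ x < rb /\ lb < y).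
Proof.
  unfold overlaps. destruct (Rlt_dec _ _) as [H|]; [right|left; reflexivity].
  pose proof (Rmax_l x lb). pose proof (Rmax_r x lb).
  pose proof (Rmin_l y rb). pose proof (Rmin_r y rb). repeat split; lra.
Qed.

Lemma sumR_rows_cols_le n (o1 o2 : nat -> nat -> R) :
  (forall a, (a < n)%nat -> sumR n (o1 a) <= 1) ->
  (forall b, (b < n)%nat -> sumR n (fun a => o2 a b) <= 1) ->
  sumR n (fun a => sumR n (fun b => o1 a b + o2 a b)) <= 2 * INR n.
Proof.
  intros Hrow Hcol.
  rewrite (sumR_ext n _ (fun a => sumR n (o1 a) + sumR n (o2 a)))
    by (intros; apply sumR_plus).
  rewrite sumR_plus, (sumR_swap n n o2).
  replace (2 * INR n) with (INR n * 1 + INR n * 1) by ring. rewrite <- !sumR_const.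
  apply Rplus_le_compat; apply sumR_le; auto.
Qed.

(** Pieces of two allocations meet in at most [2n] pairs: a piece of the
    second allocation meeting piece [a] of the first either starts at or
    before [ls a] (one such piece per [a]) or starts inside piece [a] (one
    such [a] per piece). *)
Lemma overlapping_pairs_le n ls rs lt rt :
  is_allocation n ls rs -> is_allocation n lt rt ->
  sumR n (fun a => sumR n (fun b => overlaps (ls a) (rs a) (lt b) (rt b))) <= 2 * INR n.
Proof.
  intros (SB & SD & _) (TB & TD & _).
  set (starts_before := fun a b =>
         if Rle_dec (lt b) (ls a) then overlaps (ls a) (rs a) (lt b) (rt b) else 0).
  set (starts_inside := fun a b =>
         if Rle_dec (lt b) (ls a) then 0 else overlaps (ls a) (rs a) (lt b) (rt b)).
  rewrite (sumR_ext n _ (fun a => sumR n (fun b => starts_before a b + starts_inside a b))).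
  2: { intros a _. apply sumR_ext. intros b _.
       unfold starts_before, starts_inside. destruct (Rle_dec _ _); ring. }
  apply sumR_rows_cols_le.
  - intros a Ha. apply sumR_indicator_le1.
    + intros b _. unfold starts_before. destruct (Rle_dec _ _); [|left; reflexivity].
      destruct (overlaps_cases (ls a) (rs a) (lt b) (rt b)) as [|[]]; auto.
    + intros b b' Hb Hb' E E'. unfold starts_before in E, E'.
      destruct (Rle_dec (lt b) (ls a)), (Rle_dec (lt b') (ls a)); try lra.
      destruct (overlaps_cases (ls a) (rs a) (lt b) (rt b)) as [|(_ & ? & ? & ? & ?)]; [lra|].
      destruct (overlaps_cases (ls a) (rs a) (lt b') (rt b')) as [|(_ & ? & ? & ? & ?)]; [lra|].
      destruct (Nat.eq_dec b b') as [|Hne]; [assumption|].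
      destruct (TD b b' Hb Hb' Hne) as [|[|[|]]]; lra.
  - intros b Hb. apply sumR_indicator_le1.
    + intros a _. unfold starts_inside. destruct (Rle_dec _ _); [left; reflexivity|].
      destruct (overlaps_cases (ls a) (rs a) (lt b) (rt b)) as [|[]]; auto.
    + intros a a' Ha Ha' E E'. unfold starts_inside in E, E'.
      destruct (Rle_dec (lt b) (ls a)), (Rle_dec (lt b) (ls a')); try lra.
      destruct (overlaps_cases (ls a) (rs a) (lt b) (rt b)) as [|(_ & ? & ? & ? & ?)]; [lra|].
      destruct (overlaps_cases (ls a') (rs a') (lt b) (rt b)) as [|(_ & ? & ? & ? & ?)]; [lra|].
      destruct (Nat.eq_dec a a') as [|Hne]; [assumption|].
      destruct (SD a a' Ha Ha' Hne) as [|[|[|]]]; lra.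
Qed.

(** Each agent's share in [S] is worth at most [alpha]
    times her share in [T] per overlapping piece of [T]; there are at most
    [2n] overlapping pairs, and AM-GM turns this average into a product bound. *)
Lemma ef_nash_approx n v alpha lt rt ls rs :
  (forall d, (d < n)%nat -> valuation (v d)) -> 1 <= alpha ->
  is_allocation n lt rt -> approx_EF n v alpha lt rt -> is_allocation n ls rs ->
  NSW n v ls rs <= 2 * alpha * NSW n v lt rt.
Proof.
  intros hv Halpha hT hEF hS. pose proof hS as (SB & _ & _).
  set (u := fun a => v a (lt a) (rt a)). set (f := fun a => v a (ls a) (rs a)).
  assert (Hu : forall a, (a < n)%nat -> 0 < u a) by (apply (ef_value_pos n v alpha); auto).
  assert (Hfu : forall a, (a < n)%nat -> 0 <= f a /\ 0 < u a).
  { intros a Ha. destruct (SB a Ha) as (? & ? & ?). split; [apply val_nonneg; auto|auto]. }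
  assert (Hratio : sumR n (fun a => f a / u a) <= 2 * alpha * INR n).
  { eapply Rle_trans with (alpha * sumR n (fun a => sumR n (fun b =>
                                overlaps (ls a) (rs a) (lt b) (rt b)))).
    - rewrite <- sumR_scal. apply sumR_le. intros a Ha. destruct (SB a Ha) as (? & ? & ?).
      pose proof (Hu a Ha). apply (Rmult_le_reg_r (u a)); [assumption|].
      unfold Rdiv. rewrite Rmult_assoc, Rinv_l, Rmult_1_r by lra.
      eapply Rle_trans; [apply (ef_value_le_overlaps n v alpha lt rt); auto|].
      unfold u. right. ring.
    - replace (2 * alpha * INR n) with (alpha * (2 * INR n)) by ring.
      apply Rmult_le_compat_l; [lra|]. apply overlapping_pairs_le; auto. }
  rewrite !NSW_geomean. apply geomean_le_scale.
  - apply (alloc_agents_pos n lt rt hT).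
  - lra.
  - apply prodR_pos. exact Hu.
  - apply prodR_le_of_ratio_sum; auto; lra.
Qed.

(** * The mirror image [t |-> 1 - t] of the cake *)

(** Reflecting an allocation and all valuations preserves every notion
    involved, so the case "envied piece to the left" of part (ii) reduces
    to the case "envied piece to the right". *)

Lemma one_minus_involutive x : 1 - (1 - x) = x.
Proof. ring. Qed.

Lemma valuation_reflect w : valuation w -> valuation (fun x y => w (1 - y) (1 - x)).
Proof.
  intros (Hnn & H01 & Hdiv & Hadd). split; [|split; [|split]].
  - intros x y H0 H1 H2. apply Hnn; lra.
  - rewrite Rminus_diag, Rminus_0_r. exact H01.
  - intros x y lam H0 H1 H2 H3 H4.
    destruct (Hdiv (1 - y) (1 - x) (1 - lam)) as [z [Hz1 [Hz2 Hz]]]; try lra.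
    exists (1 - z). rewrite one_minus_involutive. split; [lra|split; [lra|]].
    rewrite (Hadd (1 - y) z (1 - x)) in Hz |- *; lra.
  - intros x y z H0 H1 H2 H3. rewrite (Hadd (1 - z) (1 - y) (1 - x)); lra.
Qed.

Lemma alloc_reflect n l r :
  is_allocation n l r -> is_allocation n (fun d => 1 - r d) (fun d => 1 - l d).
Proof.
  intros (B & D & C). split; [|split].
  - intros d Hd. destruct (B d Hd). lra.
  - intros d e Hd He Hne. destruct (D d e Hd He Hne) as [|[|[|]]]; lra.
  - intros t H0 H1. destruct (C (1 - t)) as [d [Hd [? ?]]]; try lra.
    exists d. split; [exact Hd|lra].
Qed.

Lemma NSW_reflect n v l r :
  NSW n (fun d x y => v d (1 - y) (1 - x)) (fun d => 1 - r d) (fun d => 1 - l d)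
  = NSW n v l r.
Proof.
  rewrite !NSW_geomean. unfold geomean.
  rewrite (prodR_ext n _ (fun d => v d (l d) (r d))); [reflexivity|].
  intros d _. rewrite !one_minus_involutive. reflexivity.
Qed.

Lemma nash_optimal_reflect n v ls rs : nash_optimal n v ls rs ->
  nash_optimal n (fun d x y => v d (1 - y) (1 - x)) (fun d => 1 - rs d) (fun d => 1 - ls d).
Proof.
  intros [hA hopt]. split; [apply alloc_reflect, hA|].
  intros l' r' hA'. rewrite NSW_reflect.
  change (NSW n v (fun d => 1 - r' d) (fun d => 1 - l' d) <= NSW n v ls rs).
  apply hopt, alloc_reflect, hA'.
Qed.

Ltac disjoint_lra :=
  first [left; lra | right; left; lra | right; right; left; lra | right; right; right; lra].

Definition covers_without (n : nat) (l r : nat -> R) (a : nat) : Prop :=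
  forall t, 0 <= t -> t <= 1 -> exists d, (d < n)%nat /\ d <> a /\ l d <= t <= r d.

Lemma alloc_right_neighbor n l r a : is_allocation n l r -> (a < n)%nat ->
  l a < r a -> r a < 1 -> exists c, (c < n)%nat /\ c <> a /\ l c = r a.
Proof.
  intros hA Ha Hlr Hr1. pose proof hA as (B & D & _).
  destruct (B a Ha) as (Ha0 & _ & _).
  destruct (alloc_right_cover n l r (r a) hA) as [c [Hc [Hlc Hrc]]]; [lra|lra|].
  assert (Hca : c <> a) by (intros ->; lra).
  exists c. split; [exact Hc|split; [exact Hca|]].
  destruct (D a c Ha Hc (not_eq_sym Hca)) as [|[|[|]]]; lra.
Qed.

Lemma absorb_neighbor n l r l' a c :
  is_allocation n l r -> (a < n)%nat -> (c < n)%nat -> a <> c -> l c = r a ->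
  l' a = r a -> l' c = l a -> (forall d, d <> a -> d <> c -> l' d = l d) ->
  is_allocation n l' r /\ covers_without n l' r a.
Proof.
  intros hA Ha Hc Hac Hlc La Lc Ld. pose proof hA as (B & D & C).
  destruct (B a Ha) as (Ba1 & Ba2 & Ba3). destruct (B c Hc) as (Bc1 & Bc2 & Bc3).
  assert (Hcov : covers_without n l' r a).
  { intros t H0 H1. destruct (C t H0 H1) as [d [Hd [Ht1 Ht2]]].
    destruct (Nat.eq_dec d a) as [->|Hda]; [exists c; rewrite Lc; repeat split; auto; lra|].
    destruct (Nat.eq_dec d c) as [->|Hdc]; [exists c; rewrite Lc; repeat split; auto; lra|].
    exists d. rewrite Ld by auto. repeat split; auto. }
  split; [|exact Hcov]. split; [|split].
  - intros d Hd. destruct (Nat.eq_dec d a) as [->|Hda]; [rewrite La; lra|].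
    destruct (Nat.eq_dec d c) as [->|Hdc]; [rewrite Lc; lra|].
    rewrite Ld by auto. apply B, Hd.
  - intros d e Hd He Hne.
    destruct (B d Hd) as (Bd1 & Bd2 & Bd3). destruct (B e He) as (Be1 & Be2 & Be3).
    destruct (Nat.eq_dec d a) as [->|Hda]; [rewrite La; disjoint_lra|].
    destruct (Nat.eq_dec e a) as [->|Hea]; [rewrite La; disjoint_lra|].
    destruct (Nat.eq_dec d c) as [->|Hdc].
    { rewrite Lc, (Ld e) by auto.
      destruct (D c e Hc He Hne) as [|[|[|]]], (D a e Ha He (not_eq_sym Hea)) as [|[|[|]]];
        disjoint_lra. }
    destruct (Nat.eq_dec e c) as [->|Hec].
    { rewrite Lc, (Ld d) by auto.
      destruct (D d c Hd Hc Hne) as [|[|[|]]], (D d a Hd Ha Hda) as [|[|[|]]]; disjoint_lra. }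
    rewrite (Ld d), (Ld e) by auto. apply D; auto.
  - intros t H0 H1. destruct (Hcov t H0 H1) as [d [Hd [_ Ht]]]. exists d. auto.
Qed.

Lemma split_piece n l r l' r' a b z :
  is_allocation n l r -> covers_without n l r a ->
  (a < n)%nat -> (b < n)%nat -> a <> b -> l b <= z -> z <= r b ->
  ((l' a = l b /\ r' a = z /\ l' b = z /\ r' b = r b) \/
   (l' b = l b /\ r' b = z /\ l' a = z /\ r' a = r b)) ->
  (forall d, d <> a -> d <> b -> l' d = l d /\ r' d = r d) ->
  is_allocation n l' r'.
Proof.
  intros hA Hcov Ha Hb Hab Hz1 Hz2 Hpieces Hrest. pose proof hA as (B & D & _).
  destruct (B b Hb) as (Bb1 & Bb2 & Bb3).
  split; [|split].
  - intros d Hd. destruct (Nat.eq_dec d a) as [->|Hda];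
      [destruct Hpieces as [(?&?&?&?)|(?&?&?&?)]; lra|].
    destruct (Nat.eq_dec d b) as [->|Hdb];
      [destruct Hpieces as [(?&?&?&?)|(?&?&?&?)]; lra|].
    destruct (Hrest d) as [-> ->]; auto.
  - intros d e Hd He Hne.
    destruct (B d Hd) as (Bd1 & Bd2 & Bd3). destruct (B e He) as (Be1 & Be2 & Be3).
    assert (Hother : forall x, (x < n)%nat -> x <> a -> x <> b ->
        l' x = l x /\ r' x = r x /\ (l b = r b \/ l x = r x \/ r b <= l x \/ r x <= l b))
      by (intros x Hx Hxa Hxb; destruct (Hrest x Hxa Hxb); repeat split; auto).
    destruct (Nat.eq_dec d a) as [->|Hda], (Nat.eq_dec e a) as [->|Hea]; try congruence.
    + destruct (Nat.eq_dec e b) as [->|Heb];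
        [destruct Hpieces as [(?&?&?&?)|(?&?&?&?)]; disjoint_lra|].
      destruct (Hother e He Hea Heb) as (-> & -> & Hbe).
      destruct Hpieces as [(?&?&?&?)|(?&?&?&?)], Hbe as [|[|[|]]]; disjoint_lra.
    + destruct (Nat.eq_dec d b) as [->|Hdb];
        [destruct Hpieces as [(?&?&?&?)|(?&?&?&?)]; disjoint_lra|].
      destruct (Hother d Hd Hda Hdb) as (-> & -> & Hbd).
      destruct Hpieces as [(?&?&?&?)|(?&?&?&?)], Hbd as [|[|[|]]]; disjoint_lra.
    + destruct (Nat.eq_dec d b) as [->|Hdb].
      { destruct (Hother e He Hea (not_eq_sym Hne)) as (-> & -> & Hbe).
        destruct Hpieces as [(?&?&?&?)|(?&?&?&?)], Hbe as [|[|[|]]]; disjoint_lra. }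
      destruct (Nat.eq_dec e b) as [->|Heb].
      { destruct (Hother d Hd Hda Hdb) as (-> & -> & Hbd).
        destruct Hpieces as [(?&?&?&?)|(?&?&?&?)], Hbd as [|[|[|]]]; disjoint_lra. }
      destruct (Hrest d) as [-> ->]; auto. destruct (Hrest e) as [-> ->]; auto.
  - intros t H0 H1. destruct (Hcov t H0 H1) as [d [Hd [Hda Ht]]].
    destruct (Nat.eq_dec d b) as [->|Hdb].
    + destruct Hpieces as [(?&?&?&?)|(?&?&?&?)], (Rle_dec t z).
      * exists a. split; [exact Ha|lra].
      * exists b. split; [exact Hb|lra].
      * exists b. split; [exact Hb|lra].
      * exists a. split; [exact Ha|lra].
    + exists d. destruct (Hrest d) as [-> ->]; auto.
Qed.

(** * Part (ii): a Nash optimal allocation is 4-envy-free *)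

Lemma prodR_extract2 n f a b : (a < n)%nat -> (b < n)%nat -> a <> b ->
  prodR n f = f a * f b * prodR n (upd (upd f a 1) b 1).
Proof.
  intros Ha Hb Hab.
  rewrite (prodR_extract n f a Ha), (prodR_extract n (upd f a 1) b Hb), upd_other by auto.
  ring.
Qed.

Lemma prodR_lt_of_pair n f g a b : (a < n)%nat -> (b < n)%nat -> a <> b ->
  (forall d, (d < n)%nat -> 0 < f d) ->
  (forall d, (d < n)%nat -> d <> a -> d <> b -> f d <= g d) ->
  f a * f b < g a * g b -> prodR n f < prodR n g.
Proof.
  intros Ha Hb Hab Hf Hfg Hpair.
  rewrite (prodR_extract2 n f a b), (prodR_extract2 n g a b) by auto.
  set (rest_f := prodR n (upd (upd f a 1) b 1)).
  set (rest_g := prodR n (upd (upd g a 1) b 1)).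
  assert (Hrest_pos : 0 < rest_f).
  { apply prodR_pos. intros d Hd. unfold upd.
    destruct (Nat.eqb d b), (Nat.eqb d a); auto; lra. }
  assert (Hrest_le : rest_f <= rest_g).
  { apply prodR_le. intros d Hd. unfold upd.
    destruct (Nat.eqb_spec d b), (Nat.eqb_spec d a); try lra.
    pose proof (Hf d Hd). pose proof (Hfg d Hd ltac:(auto) ltac:(auto)). lra. }
  assert (0 < f a * f b) by (apply Rmult_lt_0_compat; auto).
  apply Rlt_le_trans with (g a * g b * rest_f).
  - apply Rmult_lt_compat_r; assumption.
  - apply Rmult_le_compat_l; lra.
Qed.

Lemma nash_no_trade n v ls rs l a b z pa qa pb qb :
  (forall d, (d < n)%nat -> valuation (v d)) -> nash_optimal n v ls rs ->
  (forall d, (d < n)%nat -> 0 < v d (ls d) (rs d)) ->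
  is_allocation n l rs -> covers_without n l rs a ->
  (forall d, (d < n)%nat -> d <> a -> l d <= ls d) ->
  (a < n)%nat -> (b < n)%nat -> a <> b -> l b <= z -> z <= rs b ->
  ((pa = l b /\ qa = z /\ pb = z /\ qb = rs b) \/
   (pb = l b /\ qb = z /\ pa = z /\ qa = rs b)) ->
  v a pa qa > 2 * v a (ls a) (rs a) -> v b pb qb >= / 2 * v b (ls b) (rs b) -> False.
Proof.
  intros hv [hS hopt] Hpos hA Hcov Hsub Ha Hb Hab Hz1 Hz2 Hpieces Hgain_a Hgain_b.
  pose proof hS as (SB & _ & _). pose proof hA as (LB & _ & _).
  set (l' := upd (upd l a pa) b pb). set (r' := upd (upd rs a qa) b qb).
  assert (Ea : l' a = pa /\ r' a = qa)
    by (unfold l', r'; rewrite (upd_other _ b pb a), (upd_other _ b qb a), !upd_same by auto;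
        split; reflexivity).
  assert (Eb : l' b = pb /\ r' b = qb) by (unfold l', r'; rewrite !upd_same; split; reflexivity).
  assert (Ed : forall d, d <> a -> d <> b -> l' d = l d /\ r' d = rs d)
    by (intros d Hda Hdb; unfold l', r'; rewrite !upd_other by auto; split; reflexivity).
  assert (hA' : is_allocation n l' r').
  { destruct Ea as [Ela Era], Eb as [Elb Erb].
    apply (split_piece n l rs l' r' a b z); auto.
    rewrite Ela, Era, Elb, Erb. exact Hpieces. }
  assert (Hbetter : prodR n (fun d => v d (ls d) (rs d)) < prodR n (fun d => v d (l' d) (r' d))).
  { apply prodR_lt_of_pair with a b; auto.
    - intros d Hd Hda Hdb. destruct (Ed d Hda Hdb) as [-> ->].
      destruct (SB d Hd) as (? & ? & ?). destruct (LB d Hd) as (? & ? & ?).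
      pose proof (Hsub d Hd Hda). apply val_mono; auto; lra.
    - destruct Ea as [-> ->], Eb as [-> ->].
      pose proof (Hpos a Ha). pose proof (Hpos b Hb). nra. }
  pose proof (hopt l' r' hA') as Hle. rewrite !NSW_geomean in Hle.
  pose proof (geomean_lt n _ _ (alloc_agents_pos n ls rs hS)
                (conj (prodR_pos n _ Hpos) Hbetter)) as Hlt.
  lra.
Qed.

Lemma val_half_point w x y : valuation w -> 0 <= x -> x <= y -> y <= 1 ->
  exists z, x <= z /\ z <= y /\ w x z = / 2 * w x y /\ w z y = / 2 * w x y.
Proof.
  intros hw H0 H1 H2. pose proof hw as (_ & _ & Hdiv & _).
  destruct (Hdiv x y (/ 2)) as [z [Hz1 [Hz2 Hz]]]; try lra.
  exists z. repeat split; auto.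
  rewrite (val_add w hw x z y) in Hz |- * by lra. lra.
Qed.

(** If [a] valued [b]'s
    piece more than four times her own, then: the right neighbour [c] of [a]
    absorbs [a]'s piece (nobody loses), [b]'s piece is halved for [b], and
    [a] receives the half she values more, i.e. more than twice her old
    value; this trade contradicts Nash optimality. *)
Lemma nash_EF4_right n v ls rs a b :
  (forall d, (d < n)%nat -> valuation (v d)) -> nash_optimal n v ls rs ->
  (forall d, (d < n)%nat -> 0 < v d (ls d) (rs d)) ->
  (a < n)%nat -> (b < n)%nat -> a <> b -> rs a <= ls b ->
  v a (ls a) (rs a) >= / 4 * v a (ls b) (rs b).
Proof.
  intros hv hN Hpos Ha Hb Hab Hright. pose proof hN as [hS _]. pose proof hS as (SB & _ & _).
  apply Rnot_lt_ge. intros Henvy.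
  destruct (SB a Ha) as (Ba1 & Ba2 & Ba3). destruct (SB b Hb) as (Bb1 & Bb2 & Bb3).
  pose proof (hv a Ha) as hva. pose proof (hv b Hb) as hvb. pose proof (Hpos a Ha).
  assert (Hlta : ls a < rs a) by (apply (val_pos_lt (v a)); auto).
  assert (Hltb : ls b < rs b) by (apply (val_pos_lt (v a)); auto; lra).
  destruct (alloc_right_neighbor n ls rs a hS Ha Hlta ltac:(lra)) as [c [Hc [Hca Hlc]]].
  set (l := upd (upd ls a (rs a)) c (ls a)).
  destruct (absorb_neighbor n ls rs l a c hS Ha Hc (not_eq_sym Hca) Hlc) as [hA Hcov].
  { unfold l. rewrite upd_other, upd_same by auto. reflexivity. }
  { unfold l. apply upd_same. }
  { intros d Hda Hdc. unfold l. rewrite !upd_other by auto. reflexivity. }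
  assert (Hsub : forall d, (d < n)%nat -> d <> a -> l d <= ls d).
  { intros d Hd Hda. unfold l. destruct (Nat.eq_dec d c) as [->|Hdc].
    - rewrite upd_same. lra.
    - rewrite !upd_other by auto. lra. }
  assert (Hlb : 0 <= l b <= ls b) by (destruct hA as (LB & _); destruct (LB b Hb); auto).
  destruct (val_half_point (v b) (ls b) (rs b)) as [z (Hz1 & Hz2 & Hleft_b & Hright_b)]; auto.
  rewrite (val_add (v a) hva (ls b) z (rs b)) in Henvy by lra.
  destruct (Rle_dec (/ 2 * v a (ls b) (rs b)) (v a (ls b) z)) as [Hhalf|Hhalf];
    rewrite (val_add (v a) hva (ls b) z (rs b)) in Hhalf by lra.
  - (* [a] takes the left half [l b, z], [b] keeps [z, rs b] *)
    apply (nash_no_trade n v ls rs l a b z (l b) z z (rs b)); auto; try lra.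
    pose proof (val_mono (v a) hva (l b) (ls b) z z); lra.
  - (* [a] takes the right half [z, rs b], [b] keeps [l b, z] *)
    apply (nash_no_trade n v ls rs l a b z z (rs b) (l b) z); auto; try lra.
    pose proof (val_mono (v b) hvb (l b) (ls b) z z); lra.
Qed.

(** A Nash optimal allocation whose values are all positive is 4-envy-free;
    the case of a piece to the left follows by reflecting the cake. *)
Lemma nash_optimal_EF4 n v ls rs :
  (forall d, (d < n)%nat -> valuation (v d)) -> nash_optimal n v ls rs ->
  (forall d, (d < n)%nat -> 0 < v d (ls d) (rs d)) ->
  approx_EF n v 4 ls rs.
Proof.
  intros hv hN Hpos a b Ha Hb. pose proof hN as [(SB & SD & _) _].
  destruct (SB a Ha) as (? & ? & ?). destruct (SB b Hb) as (? & ? & ?).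
  pose proof (Hpos a Ha) as Hfa.
  destruct (Nat.eq_dec a b) as [<-|Hab]; [lra|].
  destruct (SD a b Ha Hb Hab) as [Ea|[Eb|[Hright|Hleft]]].
  - rewrite Ea, val_point in Hfa by (auto; lra). lra.
  - rewrite Eb, val_point by (auto; lra). lra.
  - apply (nash_EF4_right n); auto.
  - pose proof (nash_EF4_right n (fun d x y => v d (1 - y) (1 - x))
                  (fun d => 1 - rs d) (fun d => 1 - ls d) a b) as Hrefl.
    cbv beta in Hrefl. rewrite !one_minus_involutive in Hrefl.
    apply Hrefl; auto; try lra.
    + intros d Hd. apply valuation_reflect, hv, Hd.
    + apply nash_optimal_reflect, hN.
    + intros d Hd. rewrite !one_minus_involutive. apply Hpos, Hd.
Qed.

Lemma nash_values_pos n v ls rs l r :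
  (forall d, (d < n)%nat -> valuation (v d)) -> nash_optimal n v ls rs ->
  is_allocation n l r -> 0 < NSW n v l r ->
  forall d, (d < n)%nat -> 0 < v d (ls d) (rs d).
Proof.
  intros hv [hS hopt] hA Hpos. pose proof hS as (SB & _ & _).
  apply prodR_pos_factor.
  - intros d Hd. destruct (SB d Hd) as (? & ? & ?). apply val_nonneg; auto.
  - apply geomean_pos_inv. rewrite <- NSW_geomean. pose proof (hopt l r hA). lra.
Qed.

Theorem theorem4 (n : nat) (v : nat -> R -> R -> R)
  (hv : forall a, (a < n)%nat -> valuation (v a))
  (alpha : R) (halpha : 1 <= alpha)
  (lt rt : nat -> R) (hT : is_allocation n lt rt)
  (hEF : approx_EF n v alpha lt rt)
  (ls rs : nat -> R) (hS : nash_optimal n v ls rs) :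
  NSW n v lt rt >= / (2 * alpha) * NSW n v ls rs /\
  approx_EF n v 4 ls rs.
Proof.
  split.
  -
    pose proof (ef_nash_approx n v alpha lt rt ls rs hv halpha hT hEF (proj1 hS)) as Happrox.
    apply Rle_ge. apply (Rmult_le_reg_l (2 * alpha)); [lra|].
    rewrite <- Rmult_assoc, Rinv_r, Rmult_1_l by lra. exact Happrox.
  - (* (ii): the α-envy-free allocation has positive welfare *)
    assert (HT_pos : 0 < NSW n v lt rt).
    { rewrite NSW_geomean. apply geomean_pos, prodR_pos, (ef_value_pos n v alpha); auto. }
    apply nash_optimal_EF4; auto.
    apply (nash_values_pos n v ls rs lt rt); auto.
Qed.
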